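(* Let $\mathcal{F}:\mathbb{R}^K\to\mathbb{R}^K$ be bijective with $\mathcal{F}$ and $\mathcal{F}^{-1}$ both continuously differentiable. Let $\|\cdot\|$ be an induced matrix norm (with the associated vector norm), and suppose there are constants $\gamma,\zeta,\beta$ such that $\|J(x_1)-J(x_2)\|\le\gamma$, $\|J(x)\|\le\zeta$ and $\|J^{-1}(x)\|\le\beta$ for all $x_1,x_2,x\in\mathbb{R}^K$. Let $y_1,\dots,y_M\in\mathbb{R}^K$ be desired outputs, let $x_1^0,\dots,x_M^0\in\mathbb{R}^K$ be initial inputs, and run Iterative Inversion with affine least-squares regression (as in the context). Suppose that for every iteration $n$: $\|\overline{\mathcal{F}(X^n)}-\mathcal{F}(\overline{X^n})\|\le\lambda$, and $\tilde{J}_n^{-1}=J^{-1}(\overline{X^n})(I+\Delta_n)$ for some matrix $\Delta_n$ with $\|\Delta_n\|\le\delta<1/(\zeta\beta)$. Let $\mu=\frac{\zeta^2\beta\delta}{1-\zeta\beta\delta}$ and assume $\beta(1+\delta)(\gamma+\mu)<1$. Let $\rho=\frac{2\lambda\beta(1+\delta)(\mu+\zeta)}{1-\beta(1+\delta)(\mu+\gamma)}$. Then for every $\epsilon>0$ there exists $k<\infty$ such that $\|\overline{\mathcal{F}(X^k)}-\overline{Y}\|\le\rho+\epsilon$.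
   Context: Vectors are row vectors. $J(x)\in\mathbb{R}^{K\times K}$ denotes the Jacobian of $\mathcal{F}$ at $x$ in the row convention, $\mathcal{F}(x+h)=\mathcal{F}(x)+hJ(x)+o(\|h\|)$, and $J^{-1}(x)=[J(x)]^{-1}$ (the Jacobian of $\mathcal{F}^{-1}$ at $\mathcal{F}(x)$). Iterative Inversion (affine least-squares version): with $X^n=(x_1^n,\dots,x_M^n)^T\in\mathbb{R}^{M\times K}$, $\mathcal{F}(X^n)=(\mathcal{F}(x_1^n),\dots,\mathcal{F}(x_M^n))^T$, row means $\overline{X^n}=\frac1M\sum_i x_i^n$, $\overline{\mathcal{F}(X^n)}=\frac1M\sum_i\mathcal{F}(x_i^n)$, $\overline{Y}=\frac1M\sum_i y_i$, and $\mathbf{1}$ the all-ones column vector of length $M$, set $\Theta_{n+1}=(\mathcal{F}(X^n)-\mathbf{1}\overline{\mathcal{F}(X^n)})^{\dagger}(X^n-\mathbf{1}\overline{X^n})$ and $b_{n+1}=\overline{X^n}-\overline{\mathcal{F}(X^n)}\Theta_{n+1}$ (the minimum-norm least-squares fit of $x\approx \mathcal{F}(x)\Theta+b$ on the pairs $(\mathcal{F}(x_i^n),x_i^n)$; $\dagger$ is the Moore–Penrose pseudoinverse), and $x_i^{n+1}=y_i\Theta_{n+1}+b_{n+1}$. Define $\tilde{J}_n^{-1}=\Theta_{n+1}=(\mathcal{F}(X^n)-\mathbf{1}\overline{\mathcal{F}(X^n)})^{\dagger}(X^n-\mathbf{1}\overline{X^n})$. *)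

From HB Require Import structures.
From mathcomp Require Import all_boot all_order all_algebra.
From mathcomp Require Import all_classical all_reals all_analysis.
Set Implicit Arguments. Unset Strict Implicit. Unset Printing Implicit Defensive.
Import Order.TTheory GRing.Theory Num.Theory.
Import numFieldNormedType.Exports.
Local Open Scope classical_set_scope.
Local Open Scope ring_scope.

Section Defs.
Variable R : realType.

Definition is_vnorm (K : nat) (N : 'rV[R]_K -> R) : Prop :=
  [/\ forall x y, N (x + y) <= N x + N y,
      forall (a : R) x, N (a *: x) = `|a| * N x
    & forall x, N x = 0 -> x = 0].

Definition opnorm (K : nat) (N : 'rV[R]_K -> R) (A : 'M[R]_K) : R :=
  sup [set N (x *m A) | x in [set x | N x = 1]].

Definition is_MP_pinv (m n : nat) (A : 'M[R]_(m, n)) (P : 'M[R]_(n, m)) : Prop :=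
  [/\ A *m P *m A = A, P *m A *m P = P,
      (A *m P)^T = A *m P & (P *m A)^T = P *m A].

Definition pinv (m n : nat) (A : 'M[R]_(m, n)) : 'M[R]_(n, m) :=
  xget 0 [set P | is_MP_pinv A P].

Definition rowmean (M K : nat) (X : 'M[R]_(M, K)) : 'rV[R]_K :=
  (M%:R)^-1 *: \sum_(i < M) row i X.

Definition center (M K : nat) (X : 'M[R]_(M, K)) : 'M[R]_(M, K) :=
  \matrix_(i < M) (row i X - rowmean X).

Definition Fmx (M K : nat) (F : 'rV[R]_K -> 'rV[R]_K) (X : 'M[R]_(M, K)) : 'M[R]_(M, K) :=
  \matrix_(i < M) F (row i X).

(* Theta_{n+1} computed from X^n *)
Definition IItheta (M K : nat) (F : 'rV[R]_K -> 'rV[R]_K) (X : 'M[R]_(M, K)) : 'M[R]_K :=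
  pinv (center (Fmx F X)) *m center X.

(* b_{n+1} computed from X^n *)
Definition IIb (M K : nat) (F : 'rV[R]_K -> 'rV[R]_K) (X : 'M[R]_(M, K)) : 'rV[R]_K :=
  rowmean X - rowmean (Fmx F X) *m IItheta F X.

Definition IIstep (M K : nat) (F : 'rV[R]_K -> 'rV[R]_K) (Y : 'M[R]_(M, K))
  (X : 'M[R]_(M, K)) : 'M[R]_(M, K) :=
  \matrix_(i < M) (row i Y *m IItheta F X + IIb F X).

Fixpoint IIiter (M K : nat) (F : 'rV[R]_K -> 'rV[R]_K) (Y X0 : 'M[R]_(M, K)) (n : nat)
  : 'M[R]_(M, K) :=
  match n with
  | 0 => X0
  | n'.+1 => IIstep F Y (IIiter F Y X0 n')
  end.

End Defs.

(* Write e_n for the mean output error rowmean (F X^n) - rowmean Y and J for the Jacobian at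
   the mean input x. One step moves x by h = - e_n J^-1 (I + Delta_n); as J^-1 J = I,
     e_{n+1} = (gap at X^{n+1}) - (gap at X^n) + (F (x + h) - F x - h J) - e_n J^-1 Delta_n J,
   where each gap N (mean F - F mean) is at most lambda, and the linearisation error is at most
   gamma N h by the mean value inequality, the Jacobians differing by at most gamma. Hence
   N e_{n+1} <= q N e_n + 2 lambda with q = gamma beta (1 + delta) + zeta beta delta, so N e_n
   eventually comes within eps of 2 lambda / (1 - q). Finally zeta beta >= 1 gives
   zeta delta <= mu, so q <= beta (1 + delta) (gamma + mu) < 1 and 2 lambda / (1 - q) <= rho. *)

From HB Require Import structures.
From mathcomp Require Import all_boot all_order all_algebra.
From mathcomp Require Import all_classical all_reals all_analysis.
From mathcomp Require Import lra ring.
Import Order.TTheory GRing.Theory Num.Theory.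
Import numFieldNormedType.Exports.
Local Open Scope classical_set_scope.
Local Open Scope ring_scope.
Set Implicit Arguments. Unset Strict Implicit.

Section VectorNorm.
Variables (R : realType) (K : nat) (N : 'rV[R]_K -> R).
Hypothesis hN : is_vnorm N.

Lemma ler_vnormD x y : N (x + y) <= N x + N y.
Proof. by case: hN. Qed.

Lemma vnormZ a x : N (a *: x) = `|a| * N x.
Proof. by case: hN. Qed.

Lemma vnorm0 : N 0 = 0.
Proof. by rewrite -(scale0r 0) vnormZ normr0 mul0r. Qed.

Lemma vnormN x : N (- x) = N x.
Proof. by rewrite -scaleN1r vnormZ normrN normr1 mul1r. Qed.

Lemma vnorm_ge0 x : 0 <= N x.
Proof. by have := ler_vnormD x (- x); rewrite subrr vnorm0 vnormN; lra. Qed.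

Lemma vnorm_gt0 x : x != 0 -> 0 < N x.
Proof.
move=> x0; rewrite lt0r vnorm_ge0 andbT; apply: contra x0 => /eqP.
by case: hN => _ _ /[apply] ->.
Qed.

Lemma ler_vnormB x y : N (x - y) <= N x + N y.
Proof. by rewrite -(vnormN y) ler_vnormD. Qed.

Lemma ler_vdistD x y z : N (x - z) <= N (x - y) + N (y - z).
Proof. by have := ler_vnormD (x - y) (y - z); rewrite addrA subrK. Qed.

Lemma ler_vnorm_sum (I : Type) (r : seq I) (P : pred I) (f : I -> 'rV[R]_K) :
  N (\sum_(i <- r | P i) f i) <= \sum_(i <- r | P i) N (f i).
Proof.
elim/big_ind2 : _ => [|a b c d h1 h2|//]; first by rewrite vnorm0.
exact: le_trans (ler_vnormD _ _) (lerD h1 h2).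
Qed.

Lemma vnorm_normalized x : x != 0 -> N ((N x)^-1 *: x) = 1.
Proof.
move=> x0; have Nx := vnorm_gt0 x0.
by rewrite vnormZ normfV gtr0_norm // mulVf ?gt_eqF.
Qed.

Lemma ler_vnorm_lincomb (u : 'I_K -> 'rV[R]_K) (x : 'rV[R]_K) :
  N (\sum_j x 0 j *: u j) <= `|x| * \sum_j N (u j).
Proof.
apply: le_trans (ler_vnorm_sum _ _ _) _; rewrite mulr_sumr; apply: ler_sum => j _.
rewrite vnormZ ler_wpM2r ?vnorm_ge0 // [leRHS]/Num.Def.normr /= mx_normrE.
by apply/bigmax_geP; right; exists (0, j).
Qed.

Lemma vnorm_le_mx_norm : exists2 C, 0 <= C & forall x, N x <= C * `|x|.
Proof.
exists (\sum_j N (delta_mx 0 j)); first by apply: sumr_ge0 => j _; apply: vnorm_ge0.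
by move=> x; rewrite mulrC {1}(row_sum_delta x) ler_vnorm_lincomb.
Qed.

Lemma continuous_vnorm : continuous N.
Proof.
have [C C0 NC] := vnorm_le_mx_norm.
move=> x; apply/(@cvgrPdist_le _ _ _ (nbhs x)) => e e0; near=> y.
have dxy : N (x - y) <= e.
  have Ce : (C + 1) * (e / (C + 1)) = e by rewrite mulrC divfK // gt_eqF ?ltr_wpDl.
  have : `|x - y| <= e / (C + 1).
    near: y; apply: cvgr_dist_le; first exact: cvg_id.
    by rewrite divr_gt0 ?ltr_wpDl.
  have := NC (x - y); have := normr_ge0 (x - y); nra.
have := ler_vdistD x y 0; have := ler_vdistD y x 0.
rewrite !subr0 -[y - x]opprB vnormN => h1 h2; rewrite ler_norml; apply/andP; split; lra.
Unshelve. all: by end_near.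
Qed.

End VectorNorm.

Lemma mx_norm_le_vnorm (R : realType) (K : nat) (N : 'rV[R]_K -> R) :
  is_vnorm N -> exists2 c, 0 < c & forall x, c * `|x| <= N x.
Proof.
case: K N => [|k] N' hN'.
  by exists 1 => // x; rewrite thinmx0 normr0 mulr0 (vnorm0 hN').
pose S := [set x : 'rV[R]_k.+1 | `|x| = 1].
have S0 : S !=set0.
  exists (const_mx 1); rewrite /S /= [LHS]/Num.Def.normr /= mx_normrE; apply/le_anti/andP; split.
    by apply/bigmax_leP; split=> // ij _; rewrite mxE normr1.
  by apply/bigmax_geP; right; exists (0, 0) => //; rewrite mxE normr1.
have cS : compact S.
  apply: bounded_closed_compact.
    by exists 1; split=> // r r1 x; rewrite /S /= => ->; apply: ltW.
  exact: (continuous_closedP _).1 (@norm_continuous _ _) _ (@closed_eq R 1).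
have [c Sc cmin] := EVT_min_rV S0 cS (continuous_subspaceT (continuous_vnorm hN')).
have c0 : c != 0.
  apply/eqP => c0; move: Sc; rewrite inE /S /= c0 normr0 => /eqP.
  by rewrite eq_sym oner_eq0.
exists (N' c); first exact: vnorm_gt0.
move=> x; have [->|x0] := eqVneq x 0; first by rewrite normr0 mulr0 (vnorm0 hN').
have xp : 0 < `|x| by rewrite normr_gt0.
have := cmin (`|x|^-1 *: x); rewrite inE /S /= normrZ normfV normr_id mulVf ?gt_eqF //.
by rewrite (vnormZ hN') normfV normr_id ler_pdivlMl // mulrC => /(_ erefl).
Qed.

Section OperatorNorm.
Variables (R : realType) (K : nat) (N : 'rV[R]_K -> R).
Hypothesis hN : is_vnorm N.

Lemma opnorm_ubound (A : 'M[R]_K) :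
  has_ubound [set N (x *m A) | x in [set x | N x = 1]].
Proof.
have [c c0 hc] := mx_norm_le_vnorm hN.
exists (c^-1 * \sum_j N (delta_mx 0 j *m A)) => _ [u /= Nu1 <-].
have -> : u *m A = \sum_j u 0 j *: (delta_mx 0 j *m A).
  by rewrite {1}(row_sum_delta u) mulmx_suml; apply: eq_bigr => j _; rewrite scalemxAl.
apply: le_trans (ler_vnorm_lincomb hN _ _) _.
apply: ler_wpM2r; first by apply: sumr_ge0 => j _; apply: vnorm_ge0.
by rewrite -(ler_pM2l c0) mulfV ?gt_eqF // -Nu1 hc.
Qed.

Lemma opnorm_ge0 (A : 'M[R]_K) : 0 <= opnorm N A.
Proof.
rewrite /opnorm; set S := [set _ | _ in _].
have [[y Sy]|/set0P/negP/negbNE/eqP ->] := pselect (S !=set0); last by rewrite sup0.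
have hS : has_sup S by split; [exists y | apply: opnorm_ubound].
by apply: le_trans (sup_upper_bound hS Sy); case: Sy => x _ <-; apply: vnorm_ge0.
Qed.

Lemma ler_opnorm (A : 'M[R]_K) x : N (x *m A) <= opnorm N A * N x.
Proof.
have [->|x0] := eqVneq x 0; first by rewrite mul0mx !vnorm0 // mulr0.
have Nx := vnorm_gt0 hN x0; set u := (N x)^-1 *: x.
have Nu : N u = 1 by apply: vnorm_normalized.
have Su : [set N (x *m A) | x in [set x | N x = 1]] (N (u *m A)) by exists u.
have uA : N (u *m A) <= opnorm N A.
  apply: (sup_upper_bound _ Su).
  by split; [exists (N (u *m A)) | apply: opnorm_ubound].
have -> : x *m A = N x *: (u *m A).
  by rewrite -scalemxAl /u scalerA mulfV ?gt_eqF // scale1r.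
by rewrite vnormZ // gtr0_norm // mulrC ler_pM2r.
Qed.

Lemma ler_vnorm_mulmx (A : 'M[R]_K) (c : R) x :
  opnorm N A <= c -> N (x *m A) <= c * N x.
Proof. by move=> Ac; apply: le_trans (ler_opnorm A x) (ler_wpM2r (vnorm_ge0 hN x) Ac). Qed.

Lemma opnorm_mul_ge1 (A B : 'M[R]_K) : (0 < K)%N -> A *m B = 1%:M ->
  1 <= opnorm N A * opnorm N B.
Proof.
move=> K0 AB; pose v : 'rV[R]_K := delta_mx 0 (Ordinal K0).
have v0 : v != 0.
  by apply/eqP => /matrixP /(_ 0 (Ordinal K0)) /eqP; rewrite !mxE eqxx oner_eq0.
pose u := (N v)^-1 *: v; have Nu : N u = 1 by apply: vnorm_normalized.
have : N (u *m A *m B) <= opnorm N B * (opnorm N A * N u).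
  exact/(le_trans (ler_opnorm _ _))/ler_wpM2l/ler_opnorm/opnorm_ge0.
by rewrite -mulmxA AB mulmx1 Nu mulr1 mulrC.
Qed.

End OperatorNorm.

Lemma locally_nonincreasing_le (R : realType) (phi : R -> R) :
  (forall t, 0 <= t <= 1 -> exists2 eta, 0 < eta &
     forall s, 0 < s < eta -> phi (t + s) <= phi t <= phi (t - s)) ->
  phi 1 <= phi 0.
Proof.
move=> loc.
pose A := [set t | 0 <= t <= 1 /\ forall u, 0 <= u <= t -> phi u <= phi 0].
have A0 : A 0.
  split=> [|u u0]; first by rewrite lexx ler01.
  by have -> : u = 0 by apply/le_anti; rewrite andbC.
have hA : has_sup A by split; [exists 0 | exists 1 => t [/andP[_ ?] _]].
set c := sup A.
have c0 : 0 <= c := sup_upper_bound hA A0.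
have c1 : c <= 1 by apply: ge_sup; [exists 0 | move=> t [/andP[_ ?] _]].
have below u : 0 <= u < c -> phi u <= phi 0.
  move=> /andP[u0 uc].
  have [t [_ At] ut] := @sup_adherent _ A (c - u) ltac:(by rewrite subr_gt0) hA.
  by apply: At; rewrite u0 /=; rewrite -/c in ut; lra.
have [eta eta0 loc_c] := loc c ltac:(by rewrite c0 c1).
have at_c : phi c <= phi 0.
  have [<-//|c_neq0] := eqVneq 0 c; have c_gt0 : 0 < c by rewrite lt_def eq_sym c_neq0.
  pose m := Num.min c (eta / 2).
  have m0 : 0 < m by rewrite lt_min c_gt0 divr_gt0.
  have [mc meta] : m <= c /\ m <= eta / 2 by rewrite !ge_min !lexx orbT.
  have /andP[_ le_c] := loc_c m ltac:(apply/andP; split; lra).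
  by apply: le_trans le_c (below _ _); apply/andP; split; lra.
suff c_eq1 : c = 1 by rewrite -c_eq1.
apply/eqP; rewrite eq_le c1 leNgt; apply/negP => c_lt1.
pose m := Num.min (1 - c) (eta / 2).
have m0 : 0 < m by rewrite lt_min subr_gt0 c_lt1 divr_gt0.
have [mc meta] : m <= 1 - c /\ m <= eta / 2 by rewrite !ge_min !lexx orbT.
suff /(sup_upper_bound hA) : A (c + m) by rewrite -/c; lra.
split=> [|u /andP[u0 ucm]]; first by apply/andP; split; lra.
have [uc|cu] := ltP u c; first by apply: below; rewrite u0.
have [<-//|c_lt_u] := eqVneq c u; have {}cu : c < u by rewrite lt_def eq_sym c_lt_u.
have /andP[le_c _] := loc_c (u - c) ltac:(apply/andP; split; lra).
by rewrite addrC subrK in le_c; apply: le_trans le_c at_c.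
Qed.

Lemma jacobian_approx (R : realType) K (F : 'rV[R]_K -> 'rV[R]_K) p h :
  differentiable F p -> forall e, 0 < e -> exists2 eta, 0 < eta &
  forall s : R, 0 < `|s| < eta ->
    `|F (p + s *: h) - F p - s *: (h *m jacobian F p)| <= e * `|s|.
Proof.
move=> dF e e0.
have : (fun s : R => s^-1 *: (F (s *: h + p) - F p)) @ 0^' --> h *m jacobian F p.
  by rewrite -deriveEjacobian //; apply: (diff_derivable (v := h) dF).
move/cvgrPdist_le => /(_ e e0); rewrite nearE => /nbhs_ballP[eta eta0 near_p].
exists eta => // s /andP[s0 seta].
have := near_p s; rewrite -ball_normE /= sub0r normrN -normr_gt0 s0 => /(_ seta isT).
have sn : s != 0 by rewrite -normr_gt0.
set q := h *m _ - _ => hq.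
have -> : F (p + s *: h) - F p - s *: (h *m jacobian F p) = - (s *: q).
  by rewrite /q [p + _]addrC scalerBr scalerA mulfV // scale1r opprB.
by rewrite normrN normrZ mulrC ler_wpM2r.
Qed.

Section MeanValue.
Variables (R : realType) (K : nat) (N : 'rV[R]_K -> R).
Hypothesis hN : is_vnorm N.

Lemma vnorm_jacobian_approx (F : 'rV[R]_K -> 'rV[R]_K) p h :
  differentiable F p -> forall e, 0 < e -> exists2 eta, 0 < eta &
  forall s : R, 0 < `|s| < eta ->
    N (F (p + s *: h) - F p - s *: (h *m jacobian F p)) <= e * `|s|.
Proof.
move=> dF e e0; have [C C0 NC] := vnorm_le_mx_norm hN.
have [eta eta0 approx] := jacobian_approx h dF (divr_gt0 e0 (ltr_wpDl C0 ltr01)).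
exists eta => // s /approx; set r := F _ - _ - _ => hr.
have Ce : C * (e / (C + 1)) <= e by rewrite mulrA ler_pdivrMr ?ltr_wpDl //; nra.
apply: le_trans (NC r) _; apply: le_trans (ler_wpM2l C0 hr) _.
by rewrite mulrA ler_wpM2r.
Qed.

Lemma vnorm_mean_value (g : R -> 'rV[R]_K) (L : R) :
  (forall t, 0 <= t <= 1 -> forall e, 0 < e -> exists2 eta, 0 < eta &
     forall s, 0 < `|s| < eta -> N (g (t + s) - g t) <= (L + e) * `|s|) ->
  N (g 1 - g 0) <= L.
Proof.
move=> lip; apply/ler_addgt0Pr => e e0.
pose phi u := N (g u - g 0) - (L + e) * u.
suff : phi 1 <= phi 0 by rewrite /phi subrr vnorm0 // mulr1 mulr0; lra.
apply: locally_nonincreasing_le => t t01.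
have [eta eta0 near_t] := lip t t01 e e0.
exists eta => // s /andP[s0 seta]; rewrite /phi mulrDr mulrBr.
have /near_t : 0 < `|s| < eta by rewrite gtr0_norm ?s0.
have /near_t : 0 < `|- s| < eta by rewrite normrN gtr0_norm ?s0.
rewrite normrN gtr0_norm // => left right.
have := ler_vdistD hN (g (t + s)) (g t) (g 0).
have := ler_vdistD hN (g t) (g (t - s)) (g 0).
rewrite -[g t - g (t - s)]opprB vnormN // => h1 h2.
apply/andP; split; lra.
Qed.

Lemma vnorm_taylor_le (F : 'rV[R]_K -> 'rV[R]_K) (gamma : R) :
  (forall x, differentiable F x) ->
  (forall x1 x2, opnorm N (jacobian F x1 - jacobian F x2) <= gamma) ->
  forall a h, N (F (a + h) - F a - h *m jacobian F a) <= gamma * N h.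
Proof.
move=> dF hgamma a h.
pose g (t : R) := F (a + t *: h) - t *: (h *m jacobian F a).
have -> : F (a + h) - F a - h *m jacobian F a = g 1 - g 0.
  by rewrite /g !scale1r !scale0r addr0 subr0 addrAC.
apply: vnorm_mean_value => t _ e e0; set p := a + t *: h.
have [eta eta0 approx] := vnorm_jacobian_approx h (dF p) e0.
exists eta => // s /approx; set r := F _ - _ - _ => hr.
have -> : g (t + s) - g t = r + s *: (h *m (jacobian F p - jacobian F a)).
  rewrite /g /r (_ : a + (t + s) *: h = p + s *: h) ?scalerDl ?addrA //.
  rewrite mulmxBr -/p scalerBr.
  have group_id (u v w y z : 'rV[R]_K) : u - (z + w) - (v - z) = u - v - y + (y - w).
    by apply/rowP => j; rewrite !mxE; ring.
  exact: group_id.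
apply: le_trans (ler_vnormD hN _ _) _; rewrite vnormZ //.
have := ler_wpM2l (normr_ge0 s) (ler_vnorm_mulmx hN h (hgamma p a)).
lra.
Qed.

End MeanValue.

Lemma jacobian_cancel (R : realType) K (F G : 'rV[R]_K -> 'rV[R]_K) :
  cancel F G -> (forall x, differentiable F x) -> (forall x, differentiable G x) ->
  forall x, jacobian F x *m jacobian G (F x) = 1%:M.
Proof.
move=> FK dF dG x.
have dGF := diff_comp (dF x) (dG (F x)).
rewrite (_ : G \o F = id) in dGF; last exact/funext/FK.
have did : 'd id x = id :> ('rV[R]_K -> 'rV[R]_K) by case: (is_diff_id x).
apply/row_matrixP => i; rewrite !rowE mulmx1 mulmxA /jacobian !mul_rV_lin1 /=.
have dGFi : ('d G (F x) \o 'd F x) (delta_mx 0 i) = delta_mx 0 i by rewrite -dGF did.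
exact: dGFi.
Qed.

Lemma affine_contraction_eventually_le (R : realType) (a : nat -> R) (q c eps : R) :
  0 <= q < 1 -> 0 < eps -> (forall n, a n.+1 <= q * a n + c) ->
  exists k, a k <= c / (1 - q) + eps.
Proof.
move=> /andP[q0 q1] eps0 rec; set B := c / (1 - q).
have qB : q * B + c = B by rewrite /B; field; lra.
have geom n : a n - B <= q ^+ n * (a 0%N - B).
  elim: n => [|n IH]; first by rewrite expr0 mul1r.
  have := rec n; have := ler_wpM2l q0 IH; rewrite exprS -mulrA; lra.
have : (fun n => q ^+ n * (a 0%N - B)) @ \oo --> 0.
  rewrite -(mul0r (a 0%N - B)); apply: cvgMl; apply: cvg_expr.
  by rewrite ger0_norm.
move=> /cvgr_le /(_ eps eps0) [k _ /(_ k (leqnn k)) /= ak].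
by exists k; have := geom k; lra.
Qed.

Lemma mulr_lt1_of_lt_invr (R : realFieldType) (a d : R) :
  0 <= a -> 0 <= d -> d < 1 / a -> a * d < 1.
Proof.
move=> a0 d0; have [->|a_neq0] := eqVneq a 0; first by rewrite mul0r ltr01.
by rewrite ltr_pdivlMr ?lt_def ?a_neq0 // mulrC.
Qed.

Section Rates.
Variables (R : realFieldType) (gamma zeta beta delta lambda : R).
Hypotheses (gamma0 : 0 <= gamma) (zeta0 : 0 <= zeta) (beta0 : 0 <= beta).
Hypotheses (delta0 : 0 <= delta) (lambda0 : 0 <= lambda).
Hypotheses (zeta_beta_ge1 : 1 <= zeta * beta) (zeta_beta_delta_lt1 : zeta * beta * delta < 1).

Let mu := zeta ^+ 2 * beta * delta / (1 - zeta * beta * delta).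

Lemma mu_ge0 : 0 <= mu.
Proof.
by apply: divr_ge0; [rewrite !mulr_ge0 ?exprn_ge0 | rewrite subr_ge0 ltW].
Qed.

Lemma mu_ge_zeta_delta : zeta * delta <= mu.
Proof.
rewrite /mu ler_pdivlMr ?subr_gt0 // expr2.
have := mulr_ge0 (mulr_ge0 zeta0 delta0) (mulr_ge0 (mulr_ge0 zeta0 beta0) delta0).
have := ler_peMr (mulr_ge0 zeta0 delta0) zeta_beta_ge1; nra.
Qed.

Lemma IIrate_le :
  gamma * beta * (1 + delta) + zeta * beta * delta <= beta * (1 + delta) * (gamma + mu).
Proof.
have := ler_wpM2l (mulr_ge0 beta0 (addr_ge0 ler01 delta0)) mu_ge_zeta_delta.
have := mulr_ge0 (mulr_ge0 zeta0 beta0) (mulr_ge0 delta0 delta0); nra.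
Qed.

Hypothesis rate_lt1 : beta * (1 + delta) * (gamma + mu) < 1.

Lemma rho_ge0 :
  0 <= 2 * lambda * beta * (1 + delta) * (mu + zeta)
       / (1 - beta * (1 + delta) * (mu + gamma)).
Proof.
apply: divr_ge0; first by rewrite !mulr_ge0 ?addr_ge0 ?mu_ge0.
by rewrite subr_ge0 [mu + _]addrC ltW.
Qed.

Lemma IIbound_le_rho :
  2 * lambda / (1 - (gamma * beta * (1 + delta) + zeta * beta * delta))
  <= 2 * lambda * beta * (1 + delta) * (mu + zeta)
     / (1 - beta * (1 + delta) * (mu + gamma)).
Proof.
have Q0 : 0 < 1 - beta * (1 + delta) * (mu + gamma) by rewrite [mu + _]addrC subr_gt0.
have qQ := IIrate_le; rewrite [gamma + mu]addrC in qQ.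
apply: (@le_trans _ _ (2 * lambda / (1 - beta * (1 + delta) * (mu + gamma)))).
  by rewrite ler_wpM2l ?lef_pV2 ?posrE ?mulr_ge0 //; lra.
apply: ler_wpM2r; first by rewrite invr_ge0 ltW.
have -> : 2 * lambda * beta * (1 + delta) * (mu + zeta)
          = 2 * lambda * (beta * (1 + delta) * (mu + zeta)) by rewrite !mulrA.
apply: ler_peMr; first by rewrite mulr_ge0.
have mu0 := le_trans (mulr_ge0 zeta0 delta0) mu_ge_zeta_delta.
have -> : beta * (1 + delta) * (mu + zeta)
          = zeta * beta + (beta * delta * zeta + beta * (1 + delta) * mu) by ring.
have bdz := mulr_ge0 (mulr_ge0 beta0 delta0) zeta0.
have bdmu := mulr_ge0 (mulr_ge0 beta0 (addr_ge0 ler01 delta0)) mu0.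
by apply: le_trans zeta_beta_ge1 _; rewrite lerDl addr_ge0.
Qed.

End Rates.

Lemma rowmean_IIstep (R : realType) M K (F : 'rV[R]_K -> 'rV[R]_K) (Y X : 'M[R]_(M, K)) :
  rowmean (IIstep F Y X) = rowmean X - (rowmean (Fmx F X) - rowmean Y) *m IItheta F X.
Proof.
case: M Y X => [|m] Y X.
  by rewrite /rowmean !big_ord0 invr0 !scale0r subrr mul0mx subrr.
rewrite /IIstep /IIb {1}/rowmean.
under eq_bigr do rewrite rowK.
rewrite big_split /= sumr_const card_ord -mulmx_suml scalerDr scalemxAl.
rewrite (_ : forall v : 'rV[R]_K, v *+ m.+1 = m.+1%:R *: v) => [|v]; last by rewrite scaler_nat.
rewrite scalerA mulVf ?pnatr_eq0 // scale1r -/(rowmean Y) mulmxBl.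
move: (rowmean Y *m _) (rowmean X) (rowmean (Fmx F X) *m _) => a b c.
by apply/rowP => j; rewrite !mxE; ring.
Qed.

Section IterationStep.
Variables (R : realType) (K M : nat) (F G : 'rV[R]_K -> 'rV[R]_K) (N : 'rV[R]_K -> R).
Hypotheses (FK : cancel F G) (dF : forall x, differentiable F x).
Hypotheses (dG : forall x, differentiable G x) (hN : is_vnorm N).
Variables (gamma zeta beta delta : R).
Hypothesis hgamma : forall x1 x2, opnorm N (jacobian F x1 - jacobian F x2) <= gamma.
Hypothesis hzeta : forall x, opnorm N (jacobian F x) <= zeta.
Hypothesis hbeta : forall x, opnorm N (invmx (jacobian F x)) <= beta.

Lemma IIstep_error_le (Y X : 'M[R]_(M, K)) (D : 'M[R]_K) :
  IItheta F X = invmx (jacobian F (rowmean X)) *m (1%:M + D) ->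
  opnorm N D <= delta ->
  N (rowmean (Fmx F (IIstep F Y X)) - rowmean Y)
  <= (gamma * beta * (1 + delta) + zeta * beta * delta)
       * N (rowmean (Fmx F X) - rowmean Y)
     + N (rowmean (Fmx F (IIstep F Y X)) - F (rowmean (IIstep F Y X)))
     + N (rowmean (Fmx F X) - F (rowmean X)).
Proof.
move=> hT hD.
have gamma0 : 0 <= gamma := le_trans (opnorm_ge0 hN _) (hgamma 0 0).
have zeta0 : 0 <= zeta := le_trans (opnorm_ge0 hN _) (hzeta 0).
have delta0 : 0 <= delta := le_trans (opnorm_ge0 hN _) hD.
set x := rowmean X; set J := jacobian F x; set Ji := invmx J.
set e := rowmean (Fmx F X) - rowmean Y.
set x' := rowmean (IIstep F Y X).
pose h := - (e *m Ji + e *m Ji *m D).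
have x'E : x' = x + h.
  by rewrite /x' rowmean_IIstep hT /h mulmxDr mulmx1 mulmxDr mulmxA.
have JiJ : Ji *m J = 1%:M by apply/mulVmx/(mulmx1_unit (jacobian_cancel FK dF dG x)).1.
have hJ : h *m J = - e - e *m Ji *m D *m J.
  by rewrite /h mulNmx mulmxDl -[e *m Ji *m J]mulmxA JiJ mulmx1 opprD.
have -> : rowmean (Fmx F (IIstep F Y X)) - rowmean Y
  = rowmean (Fmx F (IIstep F Y X)) - F x' - (rowmean (Fmx F X) - F x)
    + (F (x + h) - F x - h *m J) - e *m Ji *m D *m J.
  rewrite -x'E hJ; move: (e *m Ji *m D *m J) => w; rewrite /e.
  move: (rowmean (Fmx F (IIstep F Y X))) (F x') (F x) (rowmean (Fmx F X)) (rowmean Y).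
  by move=> a b c d y; apply/rowP => j; rewrite !mxE; ring.
have eJi : N (e *m Ji) <= beta * N e := ler_vnorm_mulmx hN _ (hbeta x).
have eJiD : N (e *m Ji *m D) <= delta * (beta * N e).
  exact: le_trans (ler_vnorm_mulmx hN _ hD) (ler_wpM2l delta0 eJi).
have eJiDJ : N (e *m Ji *m D *m J) <= zeta * (delta * (beta * N e)).
  exact: le_trans (ler_vnorm_mulmx hN _ (hzeta x)) (ler_wpM2l zeta0 eJiD).
have taylor : N (F (x + h) - F x - h *m J) <= gamma * (beta * N e + delta * (beta * N e)).
  apply: le_trans (vnorm_taylor_le hN dF hgamma x h) (ler_wpM2l gamma0 _).
  by rewrite /h vnormN //; apply: le_trans (ler_vnormD hN _ _) (lerD eJi eJiD).
apply: le_trans (ler_vnormB hN _ _) _; apply: le_trans (lerD (ler_vnormD hN _ _) eJiDJ) _.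
apply: le_trans (lerD (lerD (ler_vnormB hN _ _) taylor) (lexx _)) _.
rewrite -!mulrA; lra.
Qed.

End IterationStep.

Unset Implicit Arguments. Set Strict Implicit.

Theorem theorem2 (R : realType) (K M : nat)
  (F G : 'rV[R]_K -> 'rV[R]_K)
  (hFG : cancel F G) (hGF : cancel G F)
  (hFd : forall x, differentiable F x) (hFc : continuous (jacobian F))
  (hGd : forall x, differentiable G x) (hGc : continuous (jacobian G))
  (N : 'rV[R]_K -> R) (hN : is_vnorm N)
  (gamma zeta beta lambda delta : R)
  (hgamma : forall x1 x2, opnorm N (jacobian F x1 - jacobian F x2) <= gamma)
  (hzeta : forall x, opnorm N (jacobian F x) <= zeta)
  (hbeta : forall x, opnorm N (invmx (jacobian F x)) <= beta)
  (Y X0 : 'M[R]_(M, K))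
  (hlambda : forall n, N (rowmean (Fmx F (IIiter F Y X0 n))
                          - F (rowmean (IIiter F Y X0 n))) <= lambda)
  (hdelta_lt : delta < 1 / (zeta * beta))
  (hDelta : forall n, exists Delta : 'M[R]_K,
      IItheta F (IIiter F Y X0 n)
        = invmx (jacobian F (rowmean (IIiter F Y X0 n))) *m (1%:M + Delta)
      /\ opnorm N Delta <= delta) :
  let mu := zeta ^+ 2 * beta * delta / (1 - zeta * beta * delta) in
  beta * (1 + delta) * (gamma + mu) < 1 ->
  let rho := 2 * lambda * beta * (1 + delta) * (mu + zeta)
             / (1 - beta * (1 + delta) * (mu + gamma)) in
  forall eps : R, 0 < eps ->
  exists k : nat, N (rowmean (Fmx F (IIiter F Y X0 k)) - rowmean Y) <= rho + eps.
Proof.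
move=> mu rate_lt1 rho eps eps0.
have gamma0 : 0 <= gamma := le_trans (opnorm_ge0 hN _) (hgamma 0 0).
have zeta0 : 0 <= zeta := le_trans (opnorm_ge0 hN _) (hzeta 0).
have beta0 : 0 <= beta := le_trans (opnorm_ge0 hN _) (hbeta 0).
have lambda0 : 0 <= lambda := le_trans (vnorm_ge0 hN _) (hlambda 0%N).
have [D0 [_ /(le_trans (opnorm_ge0 hN _)) delta0]] := hDelta 0%N.
have zbd := mulr_lt1_of_lt_invr (mulr_ge0 zeta0 beta0) delta0 hdelta_lt.
(* For K = 0 every norm vanishes, whereas zeta * beta >= 1 needs a nonzero vector. *)
have [K0|K_gt0] := posnP K.
  subst K; exists 0%N; rewrite [X in N X]thinmx0 vnorm0 //.
  have rho0 : 0 <= rho by apply: rho_ge0.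
  lra.
have zb1 : 1 <= zeta * beta.
  have J1 := mulmxV (mulmx1_unit (jacobian_cancel hFG hFd hGd 0)).1.
  apply: le_trans (opnorm_mul_ge1 hN K_gt0 J1) _.
  by rewrite ler_pM ?opnorm_ge0.
pose q := gamma * beta * (1 + delta) + zeta * beta * delta.
have q_lt1 : 0 <= q < 1.
  have : q <= beta * (1 + delta) * (gamma + mu) by apply: IIrate_le.
  by rewrite addr_ge0 ?mulr_ge0 ?addr_ge0 //=; lra.
have [k ek] : exists k, N (rowmean (Fmx F (IIiter F Y X0 k)) - rowmean Y)
                        <= 2 * lambda / (1 - q) + eps.
  apply: affine_contraction_eventually_le q_lt1 eps0 _ => n.
  have [D [hT hD]] := hDelta n.
  have := IIstep_error_le hFG hFd hGd hN hgamma hzeta hbeta Y hT hD.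
  by have := hlambda n; have := hlambda n.+1; rewrite -/q /=; lra.
exists k; apply: le_trans ek _; rewrite lerD2r.
by apply: IIbound_le_rho.
Qed.
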